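(* Consider the queueing system in the context under the MaxWeight policy with a diagonal matrix $\Delta$ with positive diagonal entries, in overload ($\rho\notin\mathcal{P}$). Then the vector $\eta=\lim_{t\to\infty}X(t)/t$ is the unique minimizer of $$\langle\eta,\Delta\eta\rangle=\min_{\eta'\in\Psi(\rho,\mathcal{S})}\langle\eta',\Delta\eta'\rangle,\qquad \Psi(\rho,\mathcal{S})=\Big\{(\rho-r)^+: r=\sum_{S\in\mathcal{S}}\alpha_SS,\ \alpha_S\ge0,\ \sum_{S\in\mathcal{S}}\alpha_S\le1\Big\}.$$
   Context: Model: $Q$ queues, finite set $\mathcal{S}=\{S_1,\dots,S_N\}\subset\mathbb{R}^Q_{\ge0}$ of service vectors, discrete time. Arrivals $A(t)$ with $0\le A_q(t)\le\bar A_q<\infty$ and $\rho_q=\lim_{t\to\infty}\frac1t\sum_{s=0}^{t-1}A_q(s)\in(0,\infty)$. Departures $D_q(t)=\min\{S_q(t),X_q(t)\}$, $X(t+1)=X(t)+A(t)-D(t)$, $X(0)=0$, with $S(t)\in\arg\max_{S\in\mathcal{S}}\langle S,\Delta X(t)\rangle$. $(x)^+$ is the componentwise positive part. Stability region $\mathcal{P}=\{r\in\mathbb{R}^Q_{\ge0}: r\le\sum_n\alpha_nS_n\text{ for some }\alpha_n\ge0,\sum_n\alpha_n=1\}$. (Under these assumptions the limit $\lim_t X(t)/t$ exists.) *)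

From HB Require Import structures.
From mathcomp Require Import all_boot all_order all_algebra.
From mathcomp Require Import all_classical all_reals topology normedtype sequences.
Set Implicit Arguments. Unset Strict Implicit. Unset Printing Implicit Defensive.
Import Order.TTheory GRing.Theory Num.Theory.
Import numFieldNormedType.Exports.
Local Open Scope ring_scope.
Local Open Scope classical_set_scope.

(* weighted inner product <u, Delta v> with Delta = diag(delta) *)
Definition dinner (R : realType) (Q : nat) (delta u v : 'I_Q -> R) : R :=
  \sum_(q < Q) u q * delta q * v q.

Definition pospart (R : realType) (Q : nat) (x : 'I_Q -> R) : 'I_Q -> R :=
  fun q => Num.max (x q) 0.

Definition combo (R : realType) (Q N : nat) (S : 'I_N -> 'I_Q -> R)
  (alpha : 'I_N -> R) : 'I_Q -> R :=
  fun q => \sum_(n < N) alpha n * S n q.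

Definition stab_region (R : realType) (Q N : nat) (S : 'I_N -> 'I_Q -> R)
  (r : 'I_Q -> R) : Prop :=
  (forall q, 0 <= r q) /\
  exists alpha : 'I_N -> R, (forall n, 0 <= alpha n) /\
    \sum_(n < N) alpha n = 1 /\ (forall q, r q <= combo S alpha q).

Definition Psi (R : realType) (Q N : nat) (rho : 'I_Q -> R)
  (S : 'I_N -> 'I_Q -> R) : set ('I_Q -> R) :=
  [set eta | exists alpha : 'I_N -> R, (forall n, 0 <= alpha n) /\
    \sum_(n < N) alpha n <= 1 /\
    eta = pospart (fun q => rho q - combo S alpha q)].

(* The MaxWeight queueing dynamics: arrivals A, schedule sched (index of the
   chosen service vector), queue lengths X. *)
Definition maxweight_system (R : realType) (Q N : nat)
  (S : 'I_N -> 'I_Q -> R) (delta : 'I_Q -> R)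
  (A : nat -> 'I_Q -> R) (sched : nat -> 'I_N) (X : nat -> 'I_Q -> R) : Prop :=
  (forall q, X 0%N q = 0) /\
  (forall t q, X t.+1 q = X t q + A t q - Num.min (S (sched t) q) (X t q)) /\
  (forall t n, dinner delta (S n) (X t) <= dinner delta (S (sched t)) (X t)).

From HB Require Import structures.
From mathcomp Require Import all_boot all_order all_algebra.
From mathcomp Require Import all_classical all_reals topology normedtype sequences derive.
From mathcomp Require Import lra ring.
Import Order.TTheory GRing.Theory Num.Theory.
Import numFieldNormedType.Exports.
Set Implicit Arguments. Unset Strict Implicit.
Local Open Scope ring_scope.
Local Open Scope classical_set_scope.

(* Let alpha0 minimise the convex cost <eta(alpha), Delta eta(alpha)> over the
   sub-probability vectors, where eta(alpha) = (rho - sum_n alpha_n S_n)^+, and let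
   eta0 = eta(alpha0).  First-order optimality of alpha0 in the direction of each
   vertex gives <Delta eta0, rho - eta0 - S_n> >= 0 for every schedule S_n.  Together
   with the MaxWeight choice of S(t), this bounds the increments of the Lyapunov
   function V(t) = <Y(t), Delta Y(t)>, Y(t) = X(t) - t eta0, by
   2 <Delta Y(t), A(t) - rho> + C.  Summing by parts against the cumulative arrival
   error sum_{s<t} A(s) - t rho = o(t) yields V(t) = o(t^2), i.e. X(t)/t -> eta0.
   The minimal value determines eta0: the cost of the midpoint of two minimisers
   falls short of their common cost by a quarter of the weighted squared distance
   between their etas. *)

Lemma max0_sqr_sub_le (R : realFieldType) (u w l : R) : 0 <= l ->
  Num.max (u - l * w) 0 ^+ 2 <=
  Num.max u 0 ^+ 2 - 2 * l * w * Num.max u 0 + l ^+ 2 * w ^+ 2.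
Proof.
move=> l0; rewrite /Num.max /Order.max.
by case: ifPn => h1; case: ifPn => h2; rewrite ?ltNge ?negbK in h1 h2; nra.
Qed.

Lemma max0_midpoint_le (R : realFieldType) (u v : R) :
  Num.max ((u + v) / 2) 0 <= (Num.max u 0 + Num.max v 0) / 2.
Proof.
rewrite /Num.max /Order.max.
by case: ifPn => h1; case: ifPn => h2; case: ifPn => h3;
  rewrite ?ltNge ?negbK in h1 h2 h3; lra.
Qed.

Lemma psumr_sqr_eq0 (R : realFieldType) (Q : nat) (delta f : 'I_Q -> R) :
  (forall q, 0 < delta q) -> \sum_(q < Q) delta q * f q ^+ 2 <= 0 ->
  forall q, f q = 0.
Proof.
move=> delta_gt0 sum_le0 q.
have ge0 i : true -> 0 <= delta i * f i ^+ 2.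
  by move=> _; rewrite mulr_ge0 ?sqr_ge0 ?ltW.
have sum0 : \sum_(q < Q) delta q * f q ^+ 2 = 0.
  by apply/le_anti; rewrite sum_le0 sumr_ge0.
have /(_ q isT)/eqP := psumr_eq0P ge0 sum0.
by rewrite mulf_eq0 gt_eqF //= sqrf_eq0 => /eqP.
Qed.

Section OverloadProgram.
Variables (R : realType) (Q N : nat) (S : 'I_N -> 'I_Q -> R) (delta rho : 'I_Q -> R).
Hypothesis delta_gt0 : forall q, 0 < delta q.

Definition feasible (alpha : 'I_N -> R) :=
  (forall n, 0 <= alpha n) /\ \sum_(n < N) alpha n <= 1.

Definition eta_of (alpha : 'I_N -> R) := pospart (fun q => rho q - combo S alpha q).

Definition cost (alpha : 'I_N -> R) := dinner delta (eta_of alpha) (eta_of alpha).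

Definition cost_argmin (alpha : 'I_N -> R) :=
  feasible alpha /\ forall beta, feasible beta -> cost alpha <= cost beta.

Definition mix (alpha beta : 'I_N -> R) (l : R) n := (1 - l) * alpha n + l * beta n.

Lemma eta_of_ge0 a q : 0 <= eta_of a q.
Proof. by rewrite /eta_of /pospart le_max lexx orbT. Qed.

Lemma eta_of_ge a q : rho q - combo S a q <= eta_of a q.
Proof. by rewrite /eta_of /pospart le_max lexx. Qed.

Lemma eta_ofM a q : eta_of a q * (rho q - eta_of a q) = eta_of a q * combo S a q.
Proof. by rewrite /eta_of /pospart /Num.max /Order.max; case: ifP => _; ring. Qed.

Lemma combo_mix a b l q :
  combo S (mix a b l) q = combo S a q + l * (combo S b q - combo S a q).
Proof.
rewrite /combo /mix mulrBr !mulr_sumr -sumrB -!big_split /=.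
by apply: eq_bigr => n _; ring.
Qed.

Lemma feasible_mix a b l : feasible a -> feasible b -> 0 <= l <= 1 ->
  feasible (mix a b l).
Proof.
move=> [a_ge0 a_le1] [b_ge0 b_le1] /andP[l_ge0 l_le1]; split.
  by move=> n; rewrite addr_ge0 ?mulr_ge0 ?subr_ge0.
rewrite big_split /= -!mulr_sumr.
have : (1 - l) * \sum_(n < N) a n <= 1 - l by rewrite ler_piMr ?subr_ge0.
have : l * \sum_(n < N) b n <= l by rewrite ler_piMr.
lra.
Qed.

Lemma feasible_vertex n : feasible (fun m => (m == n)%:R).
Proof.
split=> [m|]; first exact: ler0n.
by rewrite (bigD1 n) //= eqxx big1 ?addr0 // => m /negbTE ->.
Qed.

Lemma combo_vertex n q : combo S (fun m => (m == n)%:R) q = S n q.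
Proof.
rewrite /combo (bigD1 n) //= eqxx mul1r big1 ?addr0 // => m /negbTE ->.
exact: mul0r.
Qed.

Lemma cost_mix_le a b l : 0 <= l ->
  cost (mix a b l) <= cost a
    - 2 * l * (\sum_(q < Q) delta q * eta_of a q * (combo S b q - combo S a q))
    + l ^+ 2 * (\sum_(q < Q) delta q * (combo S b q - combo S a q) ^+ 2).
Proof.
move=> l_ge0; rewrite /cost /dinner !mulr_sumr -sumrB -big_split /=.
apply: ler_sum => q _; rewrite /eta_of /pospart combo_mix.
set u := rho q - combo S a q; set w := combo S b q - combo S a q.
have -> : rho q - (combo S a q + l * w) = u - l * w by rewrite /u; ring.
have := ler_wpM2l (ltW (delta_gt0 q)) (max0_sqr_sub_le u w l_ge0).
rewrite !expr2; lra.
Qed.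

Lemma cost_argmin_variational a b : cost_argmin a -> feasible b ->
  \sum_(q < Q) delta q * eta_of a q * (combo S b q - combo S a q) <= 0.
Proof.
move=> [a_feas a_min] b_feas.
set x := \sum_(q < Q) _.
set M := \sum_(q < Q) delta q * (combo S b q - combo S a q) ^+ 2.
have M_ge0 : 0 <= M by rewrite sumr_ge0 // => q _; rewrite mulr_ge0 ?sqr_ge0 ?ltW.
have slope l : 0 < l <= 1 -> 2 * x <= l * M.
  move=> /andP[l_gt0 l_le1].
  have l01 : 0 <= l <= 1 by rewrite ltW.
  have := a_min _ (feasible_mix a_feas b_feas l01).
  move: (cost_mix_le a b (ltW l_gt0)); rewrite -/x -/M => mix_le mix_ge.
  have : 0 <= l * (l * M - 2 * x) by lra.
  by rewrite pmulr_rge0 // subr_ge0.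
(* [2 x <= l M] for every [l] in (0, 1] forces [x <= 0]: try [l = x / (M + x)]. *)
rewrite leNgt; apply/negP => x_gt0.
have l_in : 0 < x / (M + x) <= 1.
  by rewrite divr_gt0 ?ler_pdivrMr /=; lra.
have := slope _ l_in; rewrite mulrAC ler_pdivlMr; last by lra.
nra.
Qed.

Lemma cost_argmin_drift_ge0 a n (d : 'I_Q -> R) : cost_argmin a ->
  (forall q, d q <= S n q) ->
  0 <= \sum_(q < Q) delta q * eta_of a q * (rho q - eta_of a q - d q).
Proof.
move=> a_min d_le.
have := cost_argmin_variational a_min (feasible_vertex n).
under eq_bigr do rewrite combo_vertex.
move=> var_le.
suff : 0 <= \sum_(q < Q) delta q * eta_of a q * (S n q - combo S a q) +
            \sum_(q < Q) delta q * eta_of a q * (rho q - eta_of a q - d q) by lra.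
rewrite -big_split sumr_ge0 //= => q _.
have w_ge0 : 0 <= delta q * eta_of a q by rewrite mulr_ge0 ?eta_of_ge0 ?ltW.
have -> : delta q * eta_of a q * (rho q - eta_of a q - d q) =
          delta q * (eta_of a q * (rho q - eta_of a q)) - delta q * eta_of a q * d q.
  by ring.
rewrite eta_ofM; have := d_le q; nra.
Qed.

Lemma cost_midpoint_le a b :
  cost (mix a b (1 / 2)) <=
  (cost a + cost b) / 2 - (\sum_(q < Q) delta q * (eta_of b q - eta_of a q) ^+ 2) / 4.
Proof.
rewrite /cost /dinner -big_split /= !mulr_suml -sumrB.
apply: ler_sum => q _.
have mid_le : eta_of (mix a b (1 / 2)) q <= (eta_of a q + eta_of b q) / 2.
  rewrite /eta_of /pospart combo_mix.
  have -> : rho q - (combo S a q + 1 / 2 * (combo S b q - combo S a q)) =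
            ((rho q - combo S a q) + (rho q - combo S b q)) / 2 by field.
  exact: max0_midpoint_le.
have := ler_pM (eta_of_ge0 _ q) (eta_of_ge0 _ q) mid_le mid_le.
move/(ler_wpM2l (ltW (delta_gt0 q))).
by rewrite !expr2; lra.
Qed.

Lemma cost_argmin_eta_unique a b : cost_argmin a -> feasible b ->
  cost b = cost a -> eta_of b = eta_of a.
Proof.
move=> [a_feas a_min] b_feas cost_eq; apply/funext => q; apply/subr0_eq.
apply: (psumr_sqr_eq0 (f := fun q => eta_of b q - eta_of a q) delta_gt0 _ q).
have mid_feas : feasible (mix a b (1 / 2)) by apply: feasible_mix => //; lra.
have := a_min _ mid_feas; have := cost_midpoint_le a b; rewrite cost_eq.
lra.
Qed.

Lemma compact_feasible_rows :
  compact [set v : 'rV[R]_N | feasible (fun n => v ord0 n)].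
Proof.
have -> : [set v : 'rV[R]_N | feasible (fun n => v ord0 n)] =
    [set v | forall n, `[0, 1] (v ord0 n)] `&` [set v | \sum_(n < N) v ord0 n <= 1].
  apply/seteqP; split=> v /=; last first.
    by move=> [v01 v_le1]; split => // n; case/andP: (v01 n).
  move=> [v_ge0 v_le1]; split=> // n; rewrite in_itv /= v_ge0 /=.
  by apply: le_trans v_le1; rewrite (bigD1 n) //= lerDl sumr_ge0.
apply: compact_closedI.
  exact: (@rV_compact R N (fun=> `[0, 1]%classic) (fun=> @segment_compact R 0 1)).
apply: (@preimage_closed _ R^o (fun v : 'rV[R]_N => \sum_(n < N) v ord0 n)
  [set x | x <= 1]); last exact: closed_le.
move=> + _; apply: continuous_big; first exact: add_continuous.
by move=> n _; exact: coord_continuous.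
Qed.

Lemma continuous_cost_row : continuous (fun v : 'rV[R]_N => cost (fun n => v ord0 n) : R^o).
Proof.
pose eta_q q (v : 'rV[R]_N) := eta_of (fun n => v ord0 n) q.
have combo_cont q : continuous (fun v : 'rV[R]_N => combo S (fun n => v ord0 n) q : R^o).
  apply: continuous_big; first exact: add_continuous.
  by move=> n _ v; apply: continuousM; [exact: coord_continuous | exact: cst_continuous].
have eta_cont q : continuous (eta_q q : _ -> R^o).
  move=> v; apply: (continuous_max (g := fun=> 0)
    (f := fun w : 'rV[R]_N => rho q - combo S (fun n => w ord0 n) q));
    last exact: cst_continuous.
  by apply: continuousB; [exact: cst_continuous | exact: combo_cont].
apply: continuous_big; first exact: add_continuous.
move=> q _ v; apply: (continuousM (s := fun w => eta_q q w * delta q) (t := eta_q q)).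
  by apply: continuousM; [exact: eta_cont | exact: cst_continuous].
exact: eta_cont.
Qed.

Lemma cost_argmin_exists : exists a, cost_argmin a.
Proof.
pose K := [set v : 'rV[R]_N | feasible (fun n => v ord0 n)].
have K_nonempty : K !=set0.
  by exists 0; split=> [n|]; rewrite ?big1 // => *; rewrite mxE.
have [c /set_mem c_feas c_min] := compact_EVT_min K_nonempty compact_feasible_rows
  (continuous_subspaceT continuous_cost_row).
exists (fun n => c ord0 n); split=> // b b_feas.
have -> : b = fun n => (\row_n b n) ord0 n by apply/funext => n; rewrite mxE.
by apply/c_min/mem_set; rewrite /K /=; under eq_fun do rewrite mxE.
Qed.
End OverloadProgram.

Lemma sum_norm_shift_le (R : realType) (e : nat -> R) (th : R) (T : nat) : 0 <= th ->
  (forall s, (T <= s)%N -> `|e s| <= th * s%:R) ->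
  forall t, (T <= t)%N ->
  \sum_(s < t) `|e s.+1| <= \sum_(s < T) `|e s.+1| + th * t%:R ^+ 2.
Proof.
move=> th_ge0 e_le t /subnKC <-; elim: (t - T)%N => [|m IH].
  by rewrite addn0 lerDl mulr_ge0 ?sqr_ge0.
rewrite addnS big_ord_recr /=.
have := e_le (T + m).+1 (leq_trans (leq_addr m T) (leqnSn _)).
rewrite -addn1 natrD; move: IH; have := ler0n R (T + m); set n := (T + m)%:R.
nra.
Qed.

Lemma nbhs_infty_le_mul (R : realType) (c th : R) : 0 < th ->
  \forall t \near \oo, c <= th * t%:R.
Proof.
move=> th_gt0; apply: filterS (nbhs_infty_ger (c / th)) => t.
by rewrite ler_pdivrMr // mulrC.
Qed.

Section MaxWeightDynamics.
Variables (R : realType) (Q N : nat) (S : 'I_N -> 'I_Q -> R) (delta : 'I_Q -> R)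
  (A : nat -> 'I_Q -> R) (Abar rho : 'I_Q -> R) (sched : nat -> 'I_N)
  (X : nat -> 'I_Q -> R) (a : 'I_N -> R).
Hypothesis S_ge0 : forall n q, 0 <= S n q.
Hypothesis delta_gt0 : forall q, 0 < delta q.
Hypothesis A_bounds : forall t q, 0 <= A t q <= Abar q.
Hypothesis system : maxweight_system S delta A sched X.
Hypothesis a_argmin : cost_argmin S delta rho a.
Hypothesis arrival_rate :
  forall q, (fun t : nat => (t%:R)^-1 * \sum_(s < t) A s q) @ \oo --> rho q.

(* Y is the deviation of the queues from the fluid path t eta, Z its increment,
   V the Lyapunov function, E the cumulative arrival error and W the cross term
   of the Lyapunov drift. *)
Let eta := eta_of S rho a.
Let D t q := Num.min (S (sched t) q) (X t q).
Let Y t q := X t q - t%:R * eta q.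
Let Z t q := A t q - D t q - eta q.
Let V t := \sum_(q < Q) delta q * Y t q ^+ 2.
Let Smax q := \sum_(n < N) S n q.
Let L q := Abar q + Smax q + eta q.
Let B := \sum_(q < Q) delta q * Smax q ^+ 2.
Let C := 2 * B + \sum_(q < Q) delta q * L q ^+ 2.
Let E t q := \sum_(s < t) A s q - t%:R * rho q.
Let W t q := \sum_(s < t) Y s q * (A s q - rho q).

Lemma X_ge0 t q : 0 <= X t q.
Proof.
case: system => [X0 [X_step _]]; elim: t => [|t IH]; first by rewrite X0.
rewrite X_step; have := A_bounds t q; have : Num.min (S (sched t) q) (X t q) <= X t q.
  by rewrite ge_min lexx orbT.
lra.
Qed.

Lemma S_le_Smax n q : S n q <= Smax q.
Proof. by rewrite /Smax (bigD1 n) //= lerDl sumr_ge0. Qed.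

Lemma D_bounds t q : 0 <= D t q <= S (sched t) q.
Proof. by rewrite /D le_min S_ge0 X_ge0 /= ge_min lexx. Qed.

Lemma L_ge0 q : 0 <= L q.
Proof.
have := A_bounds 0 q; have := S_le_Smax (sched 0) q; have := S_ge0 (sched 0) q.
have := eta_of_ge0 S rho a q; rewrite /L -/eta; lra.
Qed.

Lemma Z_bounds t q : - L q <= Z t q <= L q.
Proof.
have := D_bounds t q; have := A_bounds t q; have := eta_of_ge0 S rho a q.
have := S_le_Smax (sched t) q; rewrite /Z /L -/eta; lra.
Qed.

Lemma Y_step t q : Y t.+1 q = Y t q + Z t q.
Proof.
by case: system => [_ [X_step _]]; rewrite /Y /Z X_step -/(D t q) -addn1 natrD; ring.
Qed.

Lemma Y_bound t q : `|Y t q| <= t%:R * L q.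
Proof.
elim: t => [|t IH]; first by case: system => [X0 _]; rewrite /Y X0 !mul0r subr0 normr0.
rewrite Y_step -addn1 natrD mulrDl mul1r.
by apply: le_trans (ler_normD _ _) _; rewrite lerD //; have := Z_bounds t q; rewrite ler_norml.
Qed.

Lemma maxweight_ge_rate t :
  \sum_(q < Q) delta q * X t q * (rho q - eta q) <= dinner delta (S (sched t)) (X t).
Proof.
case: a_argmin => [[a_ge0 a_le1] _]; case: system => [_ [_ maxweight]].
set G := dinner _ _ _.
have G_ge0 : 0 <= G.
  by rewrite /G /dinner sumr_ge0 // => q _; rewrite mulr_ge0 ?X_ge0 // mulr_ge0 ?S_ge0 ?ltW.
apply: (@le_trans _ _ (\sum_(q < Q) delta q * X t q * combo S a q)).
  apply: ler_sum => q _; apply: ler_wpM2l; first by rewrite mulr_ge0 ?X_ge0 ?ltW.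
  by have := eta_of_ge S rho a q; rewrite -/eta; lra.
have -> : \sum_(q < Q) delta q * X t q * combo S a q =
          \sum_(n < N) a n * dinner delta (S n) (X t).
  rewrite /combo; under eq_bigr do rewrite mulr_sumr.
  rewrite exchange_big; apply: eq_bigr => n _; rewrite /dinner mulr_sumr.
  by apply: eq_bigr => q _; ring.
apply: (@le_trans _ _ (\sum_(n < N) a n * G)).
  by apply: ler_sum => n _; rewrite ler_wpM2l.
by rewrite -mulr_suml ler_piMl.
Qed.

Lemma idle_service_le t : \sum_(q < Q) delta q * X t q * (S (sched t) q - D t q) <= B.
Proof.
apply: ler_sum => q _; rewrite -mulrA; apply: ler_wpM2l; first exact: ltW.
have := X_ge0 t q; have := S_le_Smax (sched t) q; have := S_ge0 (sched t) q.
rewrite /D /Num.min /Order.min; case: ifPn => [_|]; first by rewrite subrr mulr0 sqr_ge0.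
by rewrite -leNgt; nra.
Qed.

Lemma drift_le t : \sum_(q < Q) delta q * Y t q * (rho q - eta q - D t q) <= B.
Proof.
have eta_drift := cost_argmin_drift_ge0 delta_gt0 (n := sched t) (d := D t) a_argmin
  (fun q => proj2 (andP (D_bounds t q))).
have split_drift : \sum_(q < Q) delta q * Y t q * (rho q - eta q - D t q) =
   \sum_(q < Q) delta q * X t q * (rho q - eta q) - dinner delta (S (sched t)) (X t) +
   \sum_(q < Q) delta q * X t q * (S (sched t) q - D t q) -
   t%:R * \sum_(q < Q) delta q * eta q * (rho q - eta q - D t q).
  rewrite /dinner mulr_sumr -sumrB -big_split -sumrB /=.
  by apply: eq_bigr => q _; rewrite /Y; ring.
rewrite split_drift; have := maxweight_ge_rate t; have := idle_service_le t.
have := mulr_ge0 (ler0n R t) eta_drift; lra.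
Qed.

Lemma V_step t : V t.+1 <= V t + 2 * \sum_(q < Q) delta q * Y t q * (A t q - rho q) + C.
Proof.
have -> : V t.+1 = V t + 2 * \sum_(q < Q) delta q * Y t q * (A t q - rho q) +
    2 * \sum_(q < Q) delta q * Y t q * (rho q - eta q - D t q) +
    \sum_(q < Q) delta q * Z t q ^+ 2.
  by rewrite /V !mulr_sumr -!big_split /=; apply: eq_bigr => q _; rewrite Y_step /Z; ring.
have : \sum_(q < Q) delta q * Z t q ^+ 2 <= \sum_(q < Q) delta q * L q ^+ 2.
  apply: ler_sum => q _; apply: ler_wpM2l; first exact: ltW.
  by rewrite -real_normK ?num_real // ler_sqr ?nnegrE ?L_ge0 // ler_norml Z_bounds.
have := drift_le t; rewrite /C; lra.
Qed.

Lemma V_bound t : V t <= 2 * \sum_(q < Q) delta q * W t q + t%:R * C.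
Proof.
elim: t => [|t IH].
  have Y0 q : Y 0 q = 0 by case: system => [X0 _]; rewrite /Y X0 mul0r subr0.
  rewrite /V big1 => [|q _]; last by rewrite Y0 expr0n mulr0.
  rewrite big1 => [|q _]; last by rewrite /W big_ord0 mulr0.
  by rewrite mulr0 mul0r addr0.
have -> : \sum_(q < Q) delta q * W t.+1 q =
    \sum_(q < Q) delta q * W t q + \sum_(q < Q) delta q * Y t q * (A t q - rho q).
  by rewrite -big_split /=; apply: eq_bigr => q _; rewrite /W big_ord_recr /=; ring.
have := V_step t; rewrite -addn1 natrD; lra.
Qed.

Lemma W_abel t q : W t q = Y t q * E t q - \sum_(s < t) Z s q * E s.+1 q.
Proof.
elim: t => [|t IH]; first by rewrite /W /E /Y !big_ord0 !mul0r !subr0 mulr0.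
rewrite /W big_ord_recr /= -/(W t q) IH [in RHS]big_ord_recr /= Y_step.
have -> : E t.+1 q = E t q + A t q - rho q by rewrite /E big_ord_recr /= -addn1 natrD; ring.
ring.
Qed.

Lemma W_bound (th : R) (T : nat) q : 0 <= th ->
  (forall s, (T <= s)%N -> `|E s q| <= th * s%:R) ->
  forall t, (T <= t)%N ->
  `|W t q| <= 2 * L q * th * t%:R ^+ 2 + L q * \sum_(s < T) `|E s.+1 q|.
Proof.
move=> th_ge0 E_le t T_le_t.
have tail := sum_norm_shift_le th_ge0 E_le T_le_t.
rewrite W_abel; apply: le_trans (ler_normB _ _) _.
have YE_le : `|Y t q * E t q| <= t%:R * L q * (th * t%:R).
  by rewrite normrM ler_pM ?Y_bound ?E_le.
have ZE_le : `|\sum_(s < t) Z s q * E s.+1 q| <= L q * \sum_(s < t) `|E s.+1 q|.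
  apply: le_trans (ler_norm_sum _ _ _) _; rewrite mulr_sumr; apply: ler_sum => s _.
  by rewrite normrM ler_wpM2r //; have := Z_bounds s q; rewrite ler_norml.
have := ler_wpM2l (L_ge0 q) tail; move: YE_le ZE_le; rewrite !expr2; nra.
Qed.

Lemma E_little_o q th : 0 < th -> \forall s \near \oo, `|E s q| <= th * s%:R.
Proof.
move=> th_gt0; move/cvgrPdist_le: (@arrival_rate q) => /(_ th th_gt0).
apply: filterS2 (nbhs_infty_gt 0) => s s_gt0 dist_le.
have s_neq0 : s%:R != 0 :> R by rewrite pnatr_eq0 -lt0n.
have -> : E s q = - (s%:R * (rho q - (s%:R)^-1 * \sum_(u < s) A u q)).
  by rewrite /E; field.
by rewrite normrN normrM normr_nat mulrC ler_wpM2r.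
Qed.

Lemma W_little_o q th : 0 < th -> \forall t \near \oo, `|W t q| <= th * t%:R ^+ 2.
Proof.
move=> th_gt0; have L_q_ge0 := L_ge0 q.
pose th' := th / (4 * L q + 1).
have th'_gt0 : 0 < th' by rewrite divr_gt0 //; lra.
have th'_le : 4 * L q * th' <= th.
  by rewrite /th' mulrA ler_pdivrMr; lra.
have [T _ E_le] := E_little_o q th'_gt0.
set K := L q * \sum_(s < T) `|E s.+1 q|.
near=> t.
have T_le_t : (T <= t)%N by near: t; exact: nbhs_infty_ge.
have K_le : K <= th / 2 * t%:R by near: t; apply: nbhs_infty_le_mul; lra.
have t_ge1 : 1 <= t%:R :> R by near: t; exact: nbhs_infty_ger.
have t_le_sqr : t%:R <= t%:R ^+ 2 :> R by rewrite expr2 ler_peMr.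
apply: le_trans (W_bound (ltW th'_gt0) E_le T_le_t) _; rewrite -/K.
have := ler_wpM2r (sqr_ge0 (t%:R : R)) th'_le.
have : 0 <= th / 2 by lra.
move/ler_wpM2l => /(_ _ _ t_le_sqr); lra.
Unshelve. all: by end_near.
Qed.

Lemma V_little_o th : 0 < th -> \forall t \near \oo, V t <= th * t%:R ^+ 2.
Proof.
move=> th_gt0.
set P := \sum_(q < Q) delta q.
have P_ge0 : 0 <= P by rewrite sumr_ge0 // => q _; exact: ltW.
pose th' := th / (4 * P + 1).
have th'_gt0 : 0 < th' by rewrite divr_gt0 //; lra.
have th'_le : 4 * P * th' <= th by rewrite /th' mulrA ler_pdivrMr; lra.
near=> t.
have W_le q : `|W t q| <= th' * t%:R ^+ 2.
  by move: q; near: t; apply: filter_forall => q; exact: W_little_o.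
have C_le : C <= th / 2 * t%:R by near: t; apply: nbhs_infty_le_mul; lra.
have sum_W_le : \sum_(q < Q) delta q * W t q <= th' * t%:R ^+ 2 * P.
  rewrite /P mulr_sumr; apply: ler_sum => q _; rewrite [X in _ <= X]mulrC.
  by apply: ler_wpM2l; [exact: ltW | exact: le_trans (ler_norm _) (W_le q)].
apply: le_trans (V_bound t) _.
have := ler0n R t; move: sum_W_le C_le; rewrite !expr2; nra.
Unshelve. all: by end_near.
Qed.

Lemma queue_rate_cvg q : (fun t : nat => X t q / t%:R) @ \oo --> eta q.
Proof.
apply/cvgrPdist_le => eps eps_gt0; near=> t.
have t_gt0 : 0 < t%:R :> R by near: t; apply: filterS (nbhs_infty_gt 0) => t; rewrite ltr0n.
have V_le : V t <= delta q * eps ^+ 2 * t%:R ^+ 2.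
  by near: t; apply: V_little_o; rewrite mulr_gt0 ?exprn_gt0.
have Y_le : delta q * Y t q ^+ 2 <= V t.
  by rewrite /V (bigD1 q) //= lerDl sumr_ge0 // => i _; rewrite mulr_ge0 ?sqr_ge0 ?ltW.
have Y_norm_le : `|Y t q| <= eps * t%:R.
  have Y_sqr_le : `|Y t q| ^+ 2 <= (eps * t%:R) ^+ 2.
    by rewrite real_normK ?num_real // -(ler_pM2l (delta_gt0 q)) exprMn; lra.
  have eps_t_ge0 : 0 <= eps * t%:R by rewrite mulr_ge0 ?ltW.
  by rewrite -ler_sqr ?nnegrE ?normr_ge0.
have -> : eta q - X t q / t%:R = - (Y t q / t%:R).
  by rewrite /Y; field; rewrite gt_eqF.
by rewrite normrN normrM normfV normr_nat ler_pdivrMr.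
Unshelve. all: by end_near.
Qed.
End MaxWeightDynamics.

Unset Implicit Arguments.
Theorem proposition2 (R : realType) (Q N : nat)
  (S : 'I_N -> 'I_Q -> R) (delta : 'I_Q -> R)
  (A : nat -> 'I_Q -> R) (Abar : 'I_Q -> R) (rho : 'I_Q -> R)
  (sched : nat -> 'I_N) (X : nat -> 'I_Q -> R) :
  (0 < N)%N ->
  (forall n q, 0 <= S n q) ->
  (forall q, 0 < delta q) ->
  (forall t q, 0 <= A t q <= Abar q) ->
  (forall q, 0 < rho q) ->
  (forall q, (fun t : nat => (t%:R)^-1 * \sum_(s < t) A s q) @ \oo --> rho q) ->
  ~ stab_region S rho ->
  maxweight_system S delta A sched X ->
  exists eta : 'I_Q -> R,
    (forall q, (fun t : nat => X t q / t%:R) @ \oo --> eta q) /\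
    eta \in Psi rho S /\
    (forall eta', eta' \in Psi rho S ->
       dinner delta eta eta <= dinner delta eta' eta') /\
    (forall eta', eta' \in Psi rho S ->
       dinner delta eta' eta' = dinner delta eta eta -> eta' = eta).
Proof.
move=> _ S_ge0 delta_gt0 A_bounds _ arrival_rate _ system.
have [a a_argmin] := cost_argmin_exists S delta rho.
have Psi_feasible eta' : eta' \in Psi rho S ->
    exists2 b, feasible b & eta' = eta_of S rho b.
  by rewrite inE => -[b [b_ge0 [b_le1 ->]]]; exists b.
exists (eta_of S rho a); split.
  exact: (queue_rate_cvg S_ge0 delta_gt0 A_bounds system a_argmin arrival_rate).
split; first by rewrite inE; case: a_argmin => -[a_ge0 a_le1] _; exists a.
split=> eta' /Psi_feasible[b b_feas ->]; first exact: a_argmin.2.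
exact: cost_argmin_eta_unique.
Qed.
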